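(* Fix an integer $q\ge2$, $c\in\mathbb{R}$ and $\lambda\in(-1/q-c,-c)$ such that $f_c$ satisfies the pre-$q$-Sturmian condition for $\lambda$, with Lipschitz function $\psi$ and constant $\beta$; regard $\psi$ as a $1$-periodic function on $\mathbb{R}$. Let $\theta=\lambda+1/q+c\in(0,1/q)$ and $f=f_0$. Then: (i) For any $\lambda+q^{-1}\le x<y\le\lambda+1$: $\psi(y)-\psi(x)\le f\left(q^{-1}-\theta-\frac{y-x}{q-1}\right)-f(q^{-1}-\theta)\le f(0)-f(q^{-1}-\theta)$. (i)' For any $\lambda+q^{-1}-1\le y<x\le\lambda$: $\psi(y)-\psi(x)\le f\left(\theta-\frac{x-y}{q-1}\right)-f(\theta)\le f(0)-f(\theta)$. (ii) For any $x<y$ with $y-x<1$: $\psi(y)-\psi(x)\le f\left(q^{-1}-\theta-\frac{y-x}{q}\right)-f(q^{-1}-\theta)-f'(q^{-1}-\theta)\frac{y-x}{q(q-1)}\le -f'(q^{-1}-\theta)\frac{y-x}{q-1}$. (ii)' For any $y<x$ with $x-y<1$: $\psi(y)-\psi(x)\le f\left(\theta-\frac{x-y}{q}\right)-f(\theta)-f'(\theta)\frac{x-y}{q(q-1)}\le -f'(\theta)\frac{x-y}{q-1}$.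
   Context: $\mathbb{T}=\mathbb{R}/\mathbb{Z}$, $T(x)=qx\bmod1$. $f_0(x)=\log\left|\frac{\sin\pi qx}{\sin\pi x}\right|$ (value $\log q$ at integers), a $1$-periodic even function, real-analytic and strictly concave on $(-1/q,1/q)$ with maximum at $0$; $f_c(x)=f_0(x+c)$. $C_\lambda=[\lambda,\lambda+1/q]\bmod1$. The function $f_c$ satisfies the pre-$q$-Sturmian condition for $\lambda$ if $f_c$ is Lipschitz on $C_\lambda$ and there exist a Lipschitz $\psi:\mathbb{T}\to\mathbb{R}$ and $\beta\in\mathbb{R}$ with $f_c(x)+\psi(x)-\psi(Tx)=\beta$ for all $x\in C_\lambda$. *)

From Stdlib Require Import Reals ZArith.
From Coquelicot Require Import Coquelicot.
Open Scope R_scope.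

Definition f0 (q : nat) (x : R) : R :=
  if Req_EM_T (sin (PI * x)) 0 then ln (INR q)
  else ln (Rabs (sin (PI * INR q * x) / sin (PI * x))).

Definition fc (q : nat) (c x : R) : R := f0 q (x + c).

(* Points of R whose class mod 1 lies in C_lambda = [lambda, lambda + 1/q] mod 1. *)
Definition inC (q : nat) (lam x : R) : Prop :=
  exists k : Z, lam <= x - IZR k <= lam + / INR q.

(* Lipschitz on a subset S of T = R/Z (elements represented by reals, S given
   by a 1-periodic predicate), for the quotient distance
   d_T(x,y) = min_k |x - y - k|. *)
Definition lipschitz_on_T (S : R -> Prop) (g : R -> R) : Prop :=
  exists L : R, forall x y : R, S x -> S y -> forall k : Z,
    Rabs (g x - g y) <= L * Rabs (x - y - IZR k).

Definition periodic1 (g : R -> R) : Prop := forall x, g (x + 1) = g x.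

(* psi : T -> R, viewed as a 1-periodic function on R; T x = q x mod 1,
   so psi (T x) = psi (q x). *)
Definition pre_q_Sturmian_with (q : nat) (c lam : R) (psi : R -> R) (beta : R)
  : Prop :=
  lipschitz_on_T (inC q lam) (fc q c) /\
  periodic1 psi /\ lipschitz_on_T (fun _ => True) psi /\
  (forall x, inC q lam x -> fc q c x + psi x - psi (INR q * x) = beta).

From Stdlib Require Import Reals ZArith Lra Lia List.
From Coquelicot Require Import Coquelicot.
Import ListNotations.
Open Scope R_scope.

(* On (-1/q, 1/q), f_0(x) = log U(pi x) with U(t) = U_(q-1)(cos t) = sin (q t) / sin t,
   and (U U'' - U'^2) sin^2 t = U^2 - q^2 <= 0, so f_0 is concave there; on C_lambda,
   f_c is a translate of this concave piece.

   Let tau be the inverse branch of T with values in C_lambda.  The cohomological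
   equation gives psi z = psi (tau z) + f_c (tau z) - beta, so the increment of psi
   over an arc [x, y] of length < 1 equals the increments of psi and of f_c over
   the one or two arcs of T^-1 [x, y] inside C_lambda, of total length (y - x)/q.
   Iterating n times, the psi-part is at most L (y - x) / q^n, so psi y - psi x is
   bounded by the f_c-increments over the arcs of all generations, whose total
   length is (y - x)/(q - 1).  When [x, y] avoids C_lambda (mod 1), all these arcs
   are pairwise disjoint (T^j sends a generation-j arc into [x, y] and a later one
   into C_lambda), and concavity bounds the sum of increments of f_c over disjoint
   arcs of given total length by its increment over the initial segment of
   C_lambda of that length: this is (i).  For (ii) the expansion is used once,
   and the psi-increments over the preimage arcs are bounded by the maximal slope
   f_c'(lambda) of f_c on C_lambda, through the iteration again.  The primed
   statements are (i) and (ii) for the data reflected by x |-> -x. *)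

Lemma is_derive_sum_f_R0 (h dh : nat -> R -> R) (n : nat) (t : R) :
  (forall j, is_derive (h j) t (dh j t)) ->
  is_derive (fun u => sum_f_R0 (fun j => h j u) n) t (sum_f_R0 (fun j => dh j t) n).
Proof.
  intros Hd. rewrite <- sum_n_Reals.
  apply is_derive_ext with (fun u => sum_n (fun j => h j u) n).
  - intros u. apply sum_n_Reals.
  - apply (is_derive_sum_n (K := R_AbsRing) (V := R_NormedModule)).
    intros j _. apply Hd.
Qed.

Lemma mean_value_open (h dh : R -> R) (A B s t : R) :
  (forall x, A < x < B -> is_derive h x (dh x)) -> A < s -> s <= t -> t < B ->
  exists c, s <= c <= t /\ h t - h s = dh c * (t - s).
Proof.
  intros Hd Hs Hst Ht.
  destruct (MVT_gen h s t dh) as [c [Hc Heq]];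
    rewrite ?Rmin_left, ?Rmax_right in * by lra.
  - intros x Hx. apply Hd. lra.
  - intros x Hx. apply continuity_pt_filterlim.
    apply (ex_derive_continuous (K := R_AbsRing) (V := R_NormedModule)).
    exists (dh x). apply Hd. lra.
  - exists c. auto.
Qed.

Lemma antitone_of_derive_nonpos (h dh : R -> R) (A B s t : R) :
  (forall x, A < x < B -> is_derive h x (dh x)) -> (forall x, A < x < B -> dh x <= 0) ->
  A < s -> s <= t -> t < B -> h t <= h s.
Proof.
  intros Hd Hneg Hs Hst Ht.
  destruct (mean_value_open h dh A B s t Hd Hs Hst Ht) as [c [Hc Heq]].
  pose proof (Hneg c ltac:(lra)). nra.
Qed.

Lemma le_of_le_plus_geometric (A B C K : R) :
  1 < K -> (forall n, A <= B + C / K ^ n) -> A <= B.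
Proof.
  intros HK H.
  assert (Hgeom : is_lim_seq (fun n => (/ K) ^ n) 0).
  { apply is_lim_seq_geom. rewrite Rabs_pos_eq by (apply Rlt_le, Rinv_0_lt_compat; lra).
    rewrite <- Rinv_1. apply Rinv_lt_contravar; lra. }
  assert (Hlim : is_lim_seq (fun n => B + C * (/ K) ^ n) (B + C * 0)).
  { apply (is_lim_seq_plus' (fun _ => B) (fun n => C * (/ K) ^ n));
      [apply is_lim_seq_const | apply (is_lim_seq_scal_l _ C 0), Hgeom]. }
  assert (Hle : Rbar_le A (B + C * 0)).
  { apply (is_lim_seq_le (fun _ => A) (fun n => B + C * (/ K) ^ n));
      [| apply is_lim_seq_const | exact Hlim].
    intros n. rewrite pow_inv. apply H. }
  simpl in Hle. lra.
Qed.

(* For a concave g, mu is a separating slope at m exactly when it is a supergradient. *)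
Definition separating_slope (g : R -> R) (A m B mu : R) : Prop :=
  (forall s t, A <= s -> s <= t -> t <= m -> mu * (t - s) <= g t - g s) /\
  (forall s t, m <= s -> s <= t -> t <= B -> g t - g s <= mu * (t - s)).

Lemma separating_slope_of_derive (h dh : R -> R) (A' B' A m B : R) :
  (forall x, A' < x < B' -> is_derive h x (dh x)) ->
  (forall u v, A' < u -> u <= v -> v < B' -> dh v <= dh u) ->
  A' < A -> A <= m <= B -> B < B' ->
  separating_slope h A m B (dh m).
Proof.
  intros Hd Hmono HA Hm HB. split; intros s t Hs Hst Ht;
    destruct (mean_value_open h dh A' B' s t Hd) as [c [Hc ->]]; try lra.
  - apply Rmult_le_compat_r; [lra|]. apply Hmono; lra.
  - apply Rmult_le_compat_r; [lra|]. apply Hmono; lra.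
Qed.

Lemma separating_slope_shift (g : R -> R) (A m B mu c : R) :
  separating_slope g (A + c) (m + c) (B + c) mu ->
  separating_slope (fun z => g (z + c)) A m B mu.
Proof.
  intros [Hl Hr]. split; intros s t Hs Hst Ht.
  - replace (t - s) with ((t + c) - (s + c)) by ring. apply Hl; lra.
  - replace (t - s) with ((t + c) - (s + c)) by ring. apply Hr; lra.
Qed.

(** * The kernel U_(q-1)(cos t) *)

Definition chebU_freq (q j : nat) : R := INR q - 1 - 2 * INR j.

(* U_(q-1)(cos t) = sin (q t) / sin t, written as a cosine sum so that it is
   visibly smooth through the zeros of sin t. *)
Definition chebU (q : nat) (t : R) : R :=
  sum_f_R0 (fun j => cos (chebU_freq q j * t)) (pred q).
Definition chebU' (q : nat) (t : R) : R :=
  sum_f_R0 (fun j => - chebU_freq q j * sin (chebU_freq q j * t)) (pred q).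
Definition chebU'' (q : nat) (t : R) : R :=
  sum_f_R0 (fun j => - chebU_freq q j ^ 2 * cos (chebU_freq q j * t)) (pred q).

Section ChebyshevU.
Variable q : nat.
Hypothesis q_pos : (0 < q)%nat.
Let Q := INR q.

Lemma Q_ge1 : 1 <= Q.
Proof. apply (le_INR 1 q) in q_pos. exact q_pos. Qed.

Lemma INR_pred_q : INR (pred q) = Q - 1.
Proof. unfold Q. destruct q as [|n]; [lia|]. rewrite S_INR. simpl. ring. Qed.

Lemma is_derive_chebU t : is_derive (chebU q) t (chebU' q t).
Proof.
  apply (is_derive_sum_f_R0 (fun j u => cos (chebU_freq q j * u))
           (fun j u => - chebU_freq q j * sin (chebU_freq q j * u))).
  intros j. auto_derive; auto. ring.
Qed.

Lemma is_derive_chebU' t : is_derive (chebU' q) t (chebU'' q t).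
Proof.
  apply (is_derive_sum_f_R0 (fun j u => - chebU_freq q j * sin (chebU_freq q j * u))
           (fun j u => - chebU_freq q j ^ 2 * cos (chebU_freq q j * u))).
  intros j. auto_derive; auto. ring.
Qed.

Lemma sin_mul_chebU_partial n t :
  2 * sin t * sum_f_R0 (fun j => cos (chebU_freq q j * t)) n
  = sin (Q * t) - sin ((Q - 2 * INR n - 2) * t).
Proof.
  assert (Hstep : forall k, 2 * sin t * cos (k * t) = sin ((k + 1) * t) - sin ((k - 1) * t)).
  { intros k. replace ((k + 1) * t) with (k * t + t) by ring.
    replace ((k - 1) * t) with (k * t - t) by ring. rewrite sin_plus, sin_minus. ring. }
  unfold chebU_freq. induction n as [|n IH].
  - simpl sum_f_R0. rewrite Hstep. f_equal; f_equal; unfold Q; simpl INR; ring.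
  - rewrite tech5, Rmult_plus_distr_l, IH, Hstep, !S_INR.
    replace ((INR q - 1 - 2 * (INR n + 1) + 1) * t) with ((Q - 2 * INR n - 2) * t)
      by (unfold Q; ring).
    replace ((INR q - 1 - 2 * (INR n + 1) - 1) * t) with ((Q - 2 * (INR n + 1) - 2) * t)
      by (unfold Q; ring).
    ring.
Qed.

Lemma sin_mul_chebU t : sin t * chebU q t = sin (Q * t).
Proof.
  pose proof (sin_mul_chebU_partial (pred q) t) as H. rewrite INR_pred_q in H.
  replace ((Q - 2 * (Q - 1) - 2) * t) with (- (Q * t)) in H by ring.
  rewrite sin_neg in H. unfold chebU. lra.
Qed.

Lemma chebU_deriv_identity t : chebU' q t * sin t + chebU q t * cos t = Q * cos (Q * t).
Proof.
  assert (Hprod : is_derive (fun u => sin u * chebU q u) t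
                    (cos t * chebU q t + sin t * chebU' q t)).
  { apply (is_derive_mult (fun u => sin u) (chebU q)).
    - auto_derive; auto. ring.
    - apply is_derive_chebU.
    - intros; apply Rmult_comm. }
  assert (Hsin : is_derive (fun u => sin u * chebU q u) t (Q * cos (Q * t))).
  { apply is_derive_ext with (fun u => sin (Q * u)).
    - intros u. symmetry. apply sin_mul_chebU.
    - auto_derive; auto. ring. }
  apply is_derive_unique in Hprod, Hsin. lra.
Qed.

Lemma chebU_deriv2_identity t :
  chebU'' q t * sin t + 2 * chebU' q t * cos t - chebU q t * sin t = - Q ^ 2 * sin (Q * t).
Proof.
  set (E := fun u => chebU' q u * sin u + chebU q u * cos u).
  assert (Hsum : is_derive E t
                   ((chebU'' q t * sin t + chebU' q t * cos t)
                    + (chebU' q t * cos t - chebU q t * sin t))).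
  { apply (is_derive_plus (fun u => chebU' q u * sin u) (fun u => chebU q u * cos u)).
    - evar (l : R). replace (chebU'' q t * sin t + chebU' q t * cos t) with l.
      + apply (is_derive_mult (chebU' q) sin); [apply is_derive_chebU' | | ].
        * auto_derive; auto.
        * intros; apply Rmult_comm.
      + unfold l. simpl. unfold plus, mult. simpl. ring.
    - evar (l : R). replace (chebU' q t * cos t - chebU q t * sin t) with l.
      + apply (is_derive_mult (chebU q) cos); [apply is_derive_chebU | | ].
        * auto_derive; auto.
        * intros; apply Rmult_comm.
      + unfold l. simpl. unfold plus, mult. simpl. ring. }
  assert (Hcos : is_derive E t (- Q ^ 2 * sin (Q * t))).
  { apply is_derive_ext with (fun u => Q * cos (Q * u)).
    - intros u. symmetry. apply chebU_deriv_identity.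
    - auto_derive; auto. ring. }
  apply is_derive_unique in Hsum, Hcos. lra.
Qed.

Lemma chebU_log_concavity_identity t :
  (chebU q t * chebU'' q t - chebU' q t ^ 2) * sin t ^ 2 = chebU q t ^ 2 - Q ^ 2.
Proof.
  pose proof (sin_mul_chebU t) as E0. pose proof (chebU_deriv_identity t) as E1.
  pose proof (chebU_deriv2_identity t) as E2.
  pose proof (sin2_cos2 t) as T1. pose proof (sin2_cos2 (Q * t)) as T2. unfold Rsqr in T1, T2.
  set (D := chebU q t) in *. set (D1 := chebU' q t) in *. set (D2 := chebU'' q t) in *.
  set (s := sin t) in *. set (c := cos t) in *.
  set (S := sin (Q * t)) in *. set (C := cos (Q * t)) in *.
  assert (Z0 : s * D - S = 0) by lra.
  assert (Z1 : D1 * s + D * c - Q * C = 0) by lra.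
  assert (Z2 : D2 * s + 2 * D1 * c - D * s + Q ^ 2 * S = 0) by lra.
  assert (Z3 : s * s + c * c - 1 = 0) by lra.
  assert (Z4 : S * S + C * C - 1 = 0) by lra.
  transitivity (D ^ 2 - Q ^ 2 + D * s * (D2 * s + 2 * D1 * c - D * s + Q ^ 2 * S)
    - (D1 * s + D * c - Q * C) * (D1 * s + D * c - Q * C + 2 * Q * C)
    + D ^ 2 * (s * s + c * c - 1) - Q ^ 2 * S * (s * D - S) - Q ^ 2 * (S * S + C * C - 1)).
  - ring.
  - rewrite Z0, Z1, Z2, Z3, Z4. ring.
Qed.

Lemma chebU_abs_le t : Rabs (chebU q t) <= Q.
Proof.
  unfold chebU. eapply Rle_trans; [apply sum_f_R0_triangle|].
  eapply Rle_trans; [apply (sum_Rle _ (fun _ => 1)); intros; apply Rabs_le, COS_bound|].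
  rewrite sum_cte, Rmult_1_l. unfold Q. destruct q as [|n]; [lia|]. apply Rle_refl.
Qed.

Lemma chebU_0 : chebU q 0 = Q.
Proof.
  unfold chebU. rewrite (sum_eq _ (fun _ => 1)).
  - rewrite sum_cte, Rmult_1_l. unfold Q. destruct q as [|n]; [lia|]. reflexivity.
  - intros j _. rewrite Rmult_0_r. apply cos_0.
Qed.

Lemma chebU'_0 : chebU' q 0 = 0.
Proof.
  unfold chebU'. rewrite (sum_eq _ (fun _ => 0)).
  - rewrite sum_cte. ring.
  - intros j _. rewrite Rmult_0_r, sin_0. ring.
Qed.

Lemma chebU''_0_nonpos : chebU'' q 0 <= 0.
Proof.
  unfold chebU''. eapply Rle_trans.
  - apply (sum_Rle _ (fun _ => 0)). intros j _. rewrite Rmult_0_r, cos_0.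
    pose proof (pow2_ge_0 (chebU_freq q j)). lra.
  - rewrite sum_cte. lra.
Qed.

Lemma chebU_even t : chebU q (- t) = chebU q t.
Proof.
  apply sum_eq. intros j _. rewrite <- cos_neg. f_equal. ring.
Qed.

Lemma chebU'_odd t : chebU' q (- t) = - chebU' q t.
Proof.
  replace (- chebU' q t) with (-1 * chebU' q t) by ring.
  unfold chebU'. rewrite scal_sum. apply sum_eq. intros j _.
  replace (chebU_freq q j * - t) with (- (chebU_freq q j * t)) by ring.
  rewrite sin_neg. ring.
Qed.

Lemma sin_neq_0_near_0 t : - PI < t < PI -> t <> 0 -> sin t <> 0.
Proof.
  intros Ht Hne. destruct (Rtotal_order t 0) as [Hn | [Hz | Hp]]; [| contradiction |].
  - pose proof (sin_lt_0_var t ltac:(lra) Hn). lra.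
  - pose proof (sin_gt_0 t Hp ltac:(lra)). lra.
Qed.

Lemma PI_div_Q_le : PI / Q <= PI.
Proof.
  pose proof Q_ge1. pose proof PI_RGT_0.
  apply (Rmult_le_reg_l Q); [lra|]. unfold Rdiv. field_simplify; nra.
Qed.

Lemma chebU_pos t : - PI / Q < t < PI / Q -> 0 < chebU q t.
Proof.
  pose proof Q_ge1 as HQ. pose proof PI_RGT_0 as HPI.
  assert (Hpos : forall u, 0 < u < PI / Q -> 0 < chebU q u).
  { intros u [Hu0 HuQ].
    assert (HQu : Q * u < PI).
    { apply (Rmult_lt_compat_l Q) in HuQ; [|lra].
      replace (Q * (PI / Q)) with PI in HuQ by (field; lra). exact HuQ. }
    assert (Hs : 0 < sin u) by (apply sin_gt_0; nra).
    assert (HS : 0 < sin (Q * u)) by (apply sin_gt_0; nra).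
    pose proof (sin_mul_chebU u). nra. }
  intros Ht. destruct (Rtotal_order t 0) as [Hneg | [-> | Hp]].
  - rewrite <- chebU_even. apply Hpos. unfold Rdiv in *. lra.
  - rewrite chebU_0. lra.
  - apply Hpos. lra.
Qed.

Lemma chebU_log_concave t :
  - PI < t < PI -> chebU q t * chebU'' q t - chebU' q t ^ 2 <= 0.
Proof.
  intros Ht. pose proof Q_ge1.
  destruct (Req_dec t 0) as [-> | Hne].
  - rewrite chebU_0, chebU'_0. pose proof chebU''_0_nonpos. nra.
  - assert (Hs : 0 < sin t ^ 2).
    { rewrite <- Rsqr_pow2. apply Rsqr_pos_lt, sin_neq_0_near_0; assumption. }
    pose proof (chebU_log_concavity_identity t) as Hid.
    pose proof (chebU_abs_le t) as Habs. apply Rabs_le_between in Habs.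
    assert (chebU q t ^ 2 - Q ^ 2 <= 0) by nra.
    nra.
Qed.

End ChebyshevU.

(** * Concavity of f_0 *)

Lemma f0_even (q : nat) (x : R) : f0 q (- x) = f0 q x.
Proof.
  unfold f0. replace (PI * - x) with (- (PI * x)) by ring.
  replace (PI * INR q * - x) with (- (PI * INR q * x)) by ring. rewrite !sin_neg.
  destruct (Req_EM_T (- sin (PI * x)) 0), (Req_EM_T (sin (PI * x)) 0);
    [reflexivity | lra | lra |].
  f_equal. unfold Rdiv. rewrite Rinv_opp. f_equal. ring.
Qed.

Definition f0' (q : nat) (z : R) : R := PI * chebU' q (PI * z) / chebU q (PI * z).

Section LogSinRatio.
Variable q : nat.
Hypothesis q_pos : (0 < q)%nat.
Let Q := INR q.

Lemma PI_mul_bounds z : - / Q < z < / Q -> - PI / Q < PI * z < PI / Q.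
Proof.
  intros Hz. pose proof (Q_ge1 q q_pos). pose proof PI_RGT_0.
  unfold Rdiv. split; nra.
Qed.

Lemma f0_eq_ln_chebU z : - / Q < z < / Q -> f0 q z = ln (chebU q (PI * z)).
Proof.
  intros Hz. pose proof (chebU_pos q q_pos (PI * z) (PI_mul_bounds z Hz)) as Hpos.
  unfold f0. destruct (Req_EM_T (sin (PI * z)) 0) as [Hs | Hs].
  - assert (z = 0) as ->.
    { pose proof (PI_div_Q_le q q_pos) as HPIQ. change (INR q) with Q in HPIQ.
      pose proof (PI_mul_bounds z Hz).
      pose proof PI_RGT_0. destruct (Req_dec z 0) as [| Hne]; [assumption|].
      exfalso. apply (sin_neq_0_near_0 (PI * z)); [lra | | assumption].
      intros Hzero. apply Rmult_integral in Hzero. lra. }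
    rewrite Rmult_0_r, chebU_0 by exact q_pos. reflexivity.
  - f_equal. replace (PI * INR q * z) with (INR q * (PI * z)) by ring.
    rewrite <- (sin_mul_chebU q q_pos). unfold Rdiv.
    rewrite Rmult_comm, <- Rmult_assoc, Rinv_l, Rmult_1_l by exact Hs.
    apply Rabs_right. lra.
Qed.

Lemma is_derive_f0 z : - / Q < z < / Q -> is_derive (f0 q) z (f0' q z).
Proof.
  intros Hz.
  assert (Hloc : locally z (fun u => ln (chebU q (PI * u)) = f0 q u)).
  { assert (Hr : 0 < Rmin (z + / Q) (/ Q - z)) by (apply Rmin_pos; lra).
    exists (mkposreal _ Hr). intros u Hu.
    unfold ball in Hu; simpl in Hu; unfold AbsRing_ball, abs, minus, plus, opp in Hu; simpl in Hu.
    apply Rabs_def2 in Hu. pose proof (Rmin_l (z + / Q) (/ Q - z)).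
    pose proof (Rmin_r (z + / Q) (/ Q - z)).
    symmetry. apply f0_eq_ln_chebU. lra. }
  apply (is_derive_ext_loc _ _ _ _ Hloc).
  pose proof (chebU_pos q q_pos (PI * z) (PI_mul_bounds z Hz)) as Hpos.
  evar (l : R). replace (f0' q z) with l.
  - apply (is_derive_comp ln (fun u => chebU q (PI * u))).
    + apply is_derive_ln. exact Hpos.
    + apply (is_derive_comp (chebU q) (fun u => PI * u)).
      * apply is_derive_chebU.
      * auto_derive; auto.
  - unfold l, f0'. simpl. unfold scal. simpl. unfold mult. simpl. field. lra.
Qed.

Lemma f0'_antitone u v : - / Q < u -> u <= v -> v < / Q -> f0' q v <= f0' q u.
Proof.
  intros Hu Huv Hv. pose proof PI_RGT_0.
  pose proof (PI_mul_bounds u ltac:(lra)). pose proof (PI_mul_bounds v ltac:(lra)).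
  pose proof (PI_div_Q_le q q_pos) as HPIQ. change (INR q) with Q in HPIQ.
  unfold f0', Rdiv. rewrite !Rmult_assoc. apply Rmult_le_compat_l; [lra|].
  apply (antitone_of_derive_nonpos (fun t => chebU' q t / chebU q t)
           (fun t => (chebU'' q t * chebU q t - chebU' q t * chebU' q t) / chebU q t ^ 2)
           (- PI / Q) (PI / Q)); [| | lra | nra | lra].
  - intros t Ht. pose proof (chebU_pos q q_pos t Ht).
    apply is_derive_div; [apply is_derive_chebU' | apply is_derive_chebU | lra].
  - intros t Ht. pose proof (chebU_pos q q_pos t Ht).
    pose proof (chebU_log_concave q q_pos t ltac:(unfold Rdiv in *; lra)).
    apply Rmult_le_0_r; [nra|]. apply Rlt_le, Rinv_0_lt_compat. nra.
Qed.

Lemma f0'_0 : f0' q 0 = 0.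
Proof. unfold f0'. rewrite Rmult_0_r, chebU'_0. unfold Rdiv. ring. Qed.

Lemma f0'_odd z : f0' q (- z) = - f0' q z.
Proof.
  unfold f0'. replace (PI * - z) with (- (PI * z)) by ring.
  rewrite chebU'_odd, chebU_even. unfold Rdiv. ring.
Qed.

Lemma Derive_f0 z : - / Q < z < / Q -> Derive (f0 q) z = f0' q z.
Proof. intros Hz. apply is_derive_unique, is_derive_f0, Hz. Qed.

Lemma f0_separating_slope A m B :
  - / Q < A -> A <= m <= B -> B < / Q -> separating_slope (f0 q) A m B (f0' q m).
Proof.
  intros HA Hm HB. apply (separating_slope_of_derive _ _ (- / Q) (/ Q)); try lra.
  - intros x Hx. apply is_derive_f0. lra.
  - intros u v Hu Huv Hv. apply f0'_antitone; lra.
Qed.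

Lemma f0_le_f0_0 z : - / Q < z < / Q -> f0 q z <= f0 q 0.
Proof.
  intros Hz. destruct (Rle_dec 0 z) as [Hp | Hn].
  - destruct (f0_separating_slope 0 0 z) as [_ Hr]; try lra.
    pose proof (Hr 0 z ltac:(lra) Hp ltac:(lra)). rewrite f0'_0 in *. lra.
  - destruct (f0_separating_slope z 0 0) as [Hl _]; try lra.
    pose proof (Hl z 0 ltac:(lra) ltac:(lra) ltac:(lra)). rewrite f0'_0 in *. lra.
Qed.

End LogSinRatio.

(** * Increments over disjoint arcs *)

Definition rsum {A : Type} (F : A -> R) (l : list A) : R :=
  fold_right (fun a s => F a + s) 0 l.

Lemma rsum_app {A : Type} (F : A -> R) (l1 l2 : list A) :
  rsum F (l1 ++ l2) = rsum F l1 + rsum F l2.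
Proof. induction l1 as [|a l1 IH]; simpl; [ring | rewrite IH; ring]. Qed.

Lemma rsum_le {A : Type} (F G : A -> R) (l : list A) :
  (forall a, In a l -> F a <= G a) -> rsum F l <= rsum G l.
Proof.
  induction l as [|a l IH]; simpl; intros H; [lra|].
  pose proof (H a (or_introl eq_refl)). pose proof (IH (fun b Hb => H b (or_intror Hb))). lra.
Qed.

Lemma rsum_ext {A : Type} (F G : A -> R) (l : list A) :
  (forall a, In a l -> F a = G a) -> rsum F l = rsum G l.
Proof.
  intros H. apply Rle_antisym; apply rsum_le; intros a Ha; rewrite (H a Ha); lra.
Qed.

Lemma rsum_plus {A : Type} (F G : A -> R) (l : list A) :
  rsum (fun a => F a + G a) l = rsum F l + rsum G l.
Proof. induction l as [|a l IH]; simpl; [ring | rewrite IH; ring]. Qed.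

Lemma rsum_scal {A : Type} (c : R) (F : A -> R) (l : list A) :
  rsum (fun a => c * F a) l = c * rsum F l.
Proof. induction l as [|a l IH]; simpl; [ring | rewrite IH; ring]. Qed.

Lemma rsum_flat_map {A B : Type} (F : B -> R) (G : A -> list B) (l : list A) :
  rsum F (flat_map G l) = rsum (fun a => rsum F (G a)) l.
Proof. induction l as [|a l IH]; simpl; [reflexivity | rewrite rsum_app, IH; reflexivity]. Qed.

Lemma ForallOrdPairs_app {A : Type} (Rel : A -> A -> Prop) (l1 l2 : list A) :
  ForallOrdPairs Rel l1 -> ForallOrdPairs Rel l2 ->
  (forall a b, In a l1 -> In b l2 -> Rel a b) -> ForallOrdPairs Rel (l1 ++ l2).
Proof.
  induction l1 as [|a l1 IH]; simpl; intros H1 H2 H12; [exact H2|].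
  inversion H1 as [|? ? Ha Hl1]; subst. constructor.
  - apply Forall_app. split; [exact Ha|]. apply Forall_forall. intros b Hb. auto.
  - apply IH; auto.
Qed.

Lemma ForallOrdPairs_impl {A : Type} (R1 R2 : A -> A -> Prop) (l : list A) :
  (forall a b, In a l -> In b l -> R1 a b -> R2 a b) ->
  ForallOrdPairs R1 l -> ForallOrdPairs R2 l.
Proof.
  intros Himp H. induction H as [|a l Ha Hl IH]; constructor.
  - rewrite Forall_forall in *. intros b Hb. apply Himp; simpl; auto.
  - apply IH. intros b c Hb Hc. apply Himp; simpl; auto.
Qed.

Lemma ForallOrdPairs_flat_map {A B : Type} (Rel : B -> B -> Prop) (G : A -> list B) (l : list A) :
  (forall a, In a l -> ForallOrdPairs Rel (G a)) ->
  ForallOrdPairs (fun a a' => forall b b', In b (G a) -> In b' (G a') -> Rel b b') l ->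
  ForallOrdPairs Rel (flat_map G l).
Proof.
  intros Hin H. induction H as [|a l Ha Hl IH]; simpl; [constructor|].
  apply ForallOrdPairs_app.
  - apply Hin. simpl; auto.
  - apply IH. intros a' Ha'. apply Hin. simpl; auto.
  - intros b b' Hb Hb'. apply in_flat_map in Hb' as [a' [Ha' Hb']].
    rewrite Forall_forall in Ha. exact (Ha a' Ha' b b' Hb Hb').
Qed.

Definition incr (h : R -> R) (p : R * R) : R := h (snd p) - h (fst p).
Definition len (p : R * R) : R := snd p - fst p.

Definition interior_disjoint (p p' : R * R) : Prop :=
  forall z, fst p < z < snd p -> fst p' < z < snd p' -> False.

Lemma interior_disjoint_cases (p p' : R * R) :
  fst p <= snd p -> fst p' <= snd p' -> interior_disjoint p p' ->
  snd p' <= fst p \/ snd p <= fst p' \/ fst p' = snd p' \/ fst p = snd p.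
Proof.
  destruct p as [s t], p' as [s' t']; simpl. intros Hp Hp' Hd.
  destruct (Rle_dec t' s); [auto|]. destruct (Rle_dec t s'); [auto|].
  destruct (Req_dec s' t'); [auto|]. destruct (Req_dec s t); [auto|]. exfalso.
  apply (Hd ((Rmax s s' + Rmin t t') / 2)); simpl;
    unfold Rmax, Rmin; destruct (Rle_dec s s'), (Rle_dec t t'); lra.
Qed.

Lemma incr_collapse (U : R -> R) (s t : R) (p' : R * R) :
  s <= t -> fst p' <= snd p' -> interior_disjoint (s, t) p' ->
  incr (fun z => U (Rmin z s) + U (Rmax z t) - U t) p' = incr U p'.
Proof.
  intros Hst Hp' Hd. destruct p' as [s' t']. unfold incr. simpl in *.
  destruct (interior_disjoint_cases (s, t) (s', t') Hst Hp' Hd) as [H | [H | [H | H]]];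
    simpl in H.
  - rewrite !Rmin_left, !Rmax_right by lra. ring.
  - rewrite !Rmin_right, !Rmax_left by lra. ring.
  - subst t'. ring.
  - subst t. unfold Rmin, Rmax.
    destruct (Rle_dec s' s), (Rle_dec t' s); ring.
Qed.

Lemma sum_incr_le_total (U : R -> R) (A B : R) (l : list (R * R)) :
  (forall s t, A <= s -> s <= t -> t <= B -> U s <= U t) -> A <= B ->
  (forall p, In p l -> A <= fst p <= snd p /\ snd p <= B) ->
  ForallOrdPairs interior_disjoint l ->
  rsum (incr U) l <= U B - U A.
Proof.
  revert U. induction l as [|[s t] l IH]; intros U HU HAB Hin Hd; simpl.
  - pose proof (HU A B). lra.
  - inversion Hd as [|? ? Hfirst Hrest]; subst. rewrite Forall_forall in Hfirst.
    destruct (Hin (s, t) (or_introl eq_refl)) as [[Hs Hst] Ht]; simpl in *.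
    (* collapse [s, t] to a point; the other arcs do not see the difference *)
    set (U' := fun z => U (Rmin z s) + U (Rmax z t) - U t).
    assert (HU' : forall u v, A <= u -> u <= v -> v <= B -> U' u <= U' v).
    { intros u v Hu Huv Hv. unfold U'.
      pose proof (HU (Rmin u s) (Rmin v s)). pose proof (HU (Rmax u t) (Rmax v t)).
      unfold Rmin, Rmax in *.
      destruct (Rle_dec u s), (Rle_dec v s), (Rle_dec u t), (Rle_dec v t); lra. }
    assert (Hsame : rsum (incr U') l = rsum (incr U) l).
    { apply rsum_ext. intros p Hp. apply incr_collapse; [lra | | apply Hfirst, Hp].
      apply (Hin p (or_intror Hp)). }
    pose proof (IH U' HU' HAB (fun p Hp => Hin p (or_intror Hp)) Hrest) as Hl.
    rewrite Hsame in Hl. unfold U' in Hl.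
    rewrite Rmin_right, Rmax_left, Rmin_left, Rmax_right in Hl by lra.
    unfold incr at 1. simpl. lra.
Qed.

Lemma sum_incr_le_separating (G : R -> R) (mu A B r : R) (l : list (R * R)) :
  0 <= r -> A + r <= B -> separating_slope G A (A + r) B mu ->
  (forall p, In p l -> A <= fst p <= snd p /\ snd p <= B) ->
  ForallOrdPairs interior_disjoint l ->
  rsum (incr G) l <= G (A + r) - G A + mu * (rsum len l - r).
Proof.
  intros Hr HrB [Hleft Hright] Hin Hd.
  set (w := fun z => G z - mu * z).
  set (U := fun z => w (Rmin z (A + r))).
  assert (HU : forall s t, A <= s -> s <= t -> t <= B -> U s <= U t).
  { intros s t Hs Hst Ht. unfold U, w.
    pose proof (Hleft (Rmin s (A + r)) (Rmin t (A + r))).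
    unfold Rmin in *. destruct (Rle_dec s (A + r)), (Rle_dec t (A + r)); lra. }
  assert (Hw : forall p, In p l -> incr w p <= incr U p).
  { intros [s t] Hp. destruct (Hin (s, t) Hp) as [[Hs Hst] Ht]. simpl in *.
    unfold incr, U, w. simpl. pose proof (Hright (A + r) t). pose proof (Hright s t).
    unfold Rmin. destruct (Rle_dec s (A + r)), (Rle_dec t (A + r)); lra. }
  assert (Hsplit : rsum (incr G) l = rsum (incr w) l + mu * rsum len l).
  { rewrite <- rsum_scal, <- rsum_plus. apply rsum_ext. intros p _.
    unfold incr, len, w. ring. }
  pose proof (rsum_le _ _ l Hw). pose proof (sum_incr_le_total U A B l HU ltac:(lra) Hin Hd).
  assert (HUB : U B = w (A + r)) by (unfold U; rewrite Rmin_right by lra; reflexivity).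
  assert (HUA : U A = w A) by (unfold U; rewrite Rmin_left by lra; reflexivity).
  unfold w in HUB, HUA. lra.
Qed.

(** * Pulling arcs back along T *)

Lemma div_pred_le_inv (Q d : R) : 1 < Q -> d <= 1 - / Q -> d / (Q - 1) <= / Q.
Proof.
  intros HQ Hd. apply Rle_trans with ((1 - / Q) / (Q - 1)); [| right; field; lra].
  apply Rmult_le_compat_r; [apply Rlt_le, Rinv_0_lt_compat |]; lra.
Qed.

Section InverseBranch.
Variable q : nat.
Hypothesis q_ge2 : (2 <= q)%nat.
Variables (a beta L : R) (psi g : R -> R).
Let Q := INR q.
Hypothesis psi_periodic : periodic1 psi.
Hypothesis psi_lipschitz : forall x y, Rabs (psi x - psi y) <= L * Rabs (x - y).
Hypothesis psi_cohomology : forall x, a <= x <= a + / Q -> g x + psi x - psi (Q * x) = beta.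

Lemma Q_ge2 : 2 <= Q.
Proof. apply (le_INR 2 q) in q_ge2. exact q_ge2. Qed.

Lemma invQ_bounds : 0 < / Q <= / 2.
Proof.
  pose proof Q_ge2. split; [apply Rinv_0_lt_compat | apply Rinv_le_contravar]; lra.
Qed.

Lemma L_nonneg : 0 <= L.
Proof.
  pose proof (psi_lipschitz 1 0) as H. rewrite Rminus_0_r, Rabs_R1 in H.
  pose proof (Rabs_pos (psi 1 - psi 0)). lra.
Qed.

Lemma psi_add_int x m : psi (x + IZR m) = psi x.
Proof.
  assert (Hnat : forall y n, psi (y + INR n) = psi y).
  { intros y n. induction n as [|n IH].
    - simpl INR. rewrite Rplus_0_r. reflexivity.
    - rewrite S_INR, <- Rplus_assoc, psi_periodic. exact IH. }
  destruct m as [|p|p].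
  - simpl IZR. rewrite Rplus_0_r. reflexivity.
  - rewrite <- positive_nat_Z, <- INR_IZR_INZ. apply Hnat.
  - rewrite <- Pos2Z.opp_pos, opp_IZR, <- positive_nat_Z, <- INR_IZR_INZ.
    rewrite <- (Hnat (x + - INR (Pos.to_nat p)) (Pos.to_nat p)). f_equal. ring.
Qed.

Definition branch_index (z : R) : Z := Int_part (z - Q * a).

(* The inverse branch of x |-> Q x mod 1 with values in [a, a + 1/Q). *)
Definition inv_branch (z : R) : R := a + (z - Q * a - IZR (branch_index z)) / Q.

Lemma inv_branch_range z : a <= inv_branch z < a + / Q.
Proof.
  pose proof Q_ge2. unfold inv_branch, branch_index.
  destruct (base_Int_part (z - Q * a)) as [H1 H2].
  set (X := z - Q * a - IZR (Int_part (z - Q * a))).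
  assert (HX : 0 <= X < 1) by (unfold X; lra). split.
  - assert (0 <= X / Q) by (apply Rdiv_le_0_compat; lra). lra.
  - assert (X / Q < / Q).
    { unfold Rdiv. rewrite <- (Rmult_1_l (/ Q)) at 2.
      apply Rmult_lt_compat_r; [apply Rinv_0_lt_compat |]; lra. }
    lra.
Qed.

Lemma Q_mul_inv_branch z : Q * inv_branch z = z - IZR (branch_index z).
Proof. pose proof Q_ge2. unfold inv_branch. field. lra. Qed.

Lemma psi_inv_branch z : psi z = psi (inv_branch z) + g (inv_branch z) - beta.
Proof.
  pose proof (inv_branch_range z).
  pose proof (psi_cohomology (inv_branch z) ltac:(lra)) as Hc.
  rewrite Q_mul_inv_branch in Hc.
  rewrite <- (psi_add_int (z - IZR (branch_index z)) (branch_index z)) in Hc.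
  replace (z - IZR (branch_index z) + IZR (branch_index z)) with z in Hc by ring. lra.
Qed.

Lemma psi_g_endpoints : psi (a + / Q) + g (a + / Q) = psi a + g a.
Proof.
  pose proof Q_ge2. pose proof invQ_bounds.
  pose proof (psi_cohomology a ltac:(lra)) as Ha.
  pose proof (psi_cohomology (a + / Q) ltac:(lra)) as Hb.
  replace (Q * (a + / Q)) with (Q * a + 1) in Hb by (field; lra).
  rewrite psi_periodic in Hb. lra.
Qed.

Definition short_arc (p : R * R) : Prop := 0 <= snd p - fst p < 1.

(* The preimage of a short arc inside [a, a + 1/Q]: one arc, or two arcs when
   it crosses Q a mod 1. *)
Definition preimage_arcs (p : R * R) : list (R * R) :=
  let (u, v) := p in
  if Rle_dec (inv_branch u) (inv_branch v) then [(inv_branch u, inv_branch v)]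
  else [(inv_branch u, a + / Q); (a, inv_branch v)].

Lemma branch_index_cases u v : 0 <= v - u < 1 ->
  (inv_branch u <= inv_branch v /\ branch_index v = branch_index u) \/
  (inv_branch v < inv_branch u /\ branch_index v = (branch_index u + 1)%Z).
Proof.
  intros Huv. pose proof Q_ge2. pose proof (inv_branch_range u). pose proof (inv_branch_range v).
  pose proof (Q_mul_inv_branch u). pose proof (Q_mul_inv_branch v).
  assert (Hd : IZR (branch_index v - branch_index u) = (v - u) - Q * (inv_branch v - inv_branch u))
    by (rewrite minus_IZR; lra).
  assert (Hlt : Q * (inv_branch v - inv_branch u) < 1).
  { apply Rlt_le_trans with (Q * / Q); [apply Rmult_lt_compat_l; lra |].
    rewrite Rinv_r; lra. }
  assert (Hgt : -1 < Q * (inv_branch v - inv_branch u)).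
  { apply Rle_lt_trans with (Q * - / Q); [| apply Rmult_lt_compat_l; lra].
    field_simplify; lra. }
  assert (Hr : (-1 < branch_index v - branch_index u < 2)%Z)
    by (split; apply lt_IZR; rewrite Hd; simpl; lra).
  assert (Hc : (branch_index v - branch_index u = 0 \/ branch_index v - branch_index u = 1)%Z)
    by lia.
  destruct Hc as [Hc | Hc]; rewrite Hc in Hd; simpl in Hd; [left | right];
    (split; [| lia]); nra.
Qed.

Lemma preimage_arcs_within u v : short_arc (u, v) ->
  forall p', In p' (preimage_arcs (u, v)) -> a <= fst p' <= snd p' /\ snd p' <= a + / Q.
Proof.
  intros Hs p' Hp'. pose proof (inv_branch_range u). pose proof (inv_branch_range v).
  unfold preimage_arcs in Hp'. destruct (Rle_dec (inv_branch u) (inv_branch v)).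
  - destruct Hp' as [<- | []]. simpl. lra.
  - destruct Hp' as [<- | [<- | []]]; simpl; lra.
Qed.

Lemma rsum_len_preimage_arcs u v : short_arc (u, v) ->
  rsum len (preimage_arcs (u, v)) = (v - u) / Q.
Proof.
  intros Hs. pose proof Q_ge2. pose proof (Q_mul_inv_branch u). pose proof (Q_mul_inv_branch v).
  unfold short_arc in Hs. simpl in Hs. unfold preimage_arcs, rsum, len; simpl.
  destruct (branch_index_cases u v Hs) as [[Hle Hi] | [Hlt Hi]];
    destruct (Rle_dec (inv_branch u) (inv_branch v)); try lra; simpl;
    rewrite Hi in *; rewrite ?plus_IZR in *; simpl in *;
    apply (Rmult_eq_reg_l Q); try lra; field_simplify; lra.
Qed.

Lemma incr_psi_preimage_arcs u v : short_arc (u, v) ->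
  psi v - psi u = rsum (fun p => incr psi p + incr g p) (preimage_arcs (u, v)).
Proof.
  intros Hs. pose proof (psi_inv_branch u). pose proof (psi_inv_branch v).
  pose proof psi_g_endpoints.
  unfold preimage_arcs, rsum, incr. destruct (Rle_dec (inv_branch u) (inv_branch v)); simpl; lra.
Qed.

Lemma preimage_arcs_disjoint p : ForallOrdPairs interior_disjoint (preimage_arcs p).
Proof.
  destruct p as [u v]. unfold preimage_arcs.
  destruct (Rle_dec (inv_branch u) (inv_branch v)); repeat constructor.
  intros z Hz1 Hz2. simpl in *. lra.
Qed.

(* T^j maps the arc p into [A, B] mod 1. *)
Definition maps_into (j : nat) (p : R * R) (A B : R) : Prop :=
  exists m : Z, A <= Q ^ j * fst p - IZR m /\ Q ^ j * snd p - IZR m <= B.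

Lemma maps_into_0 p A B : A <= fst p -> snd p <= B -> maps_into 0 p A B.
Proof. intros. exists 0%Z. simpl. lra. Qed.

Lemma maps_into_S j p u v A B :
  maps_into 1 p u v -> maps_into j (u, v) A B -> maps_into (S j) p A B.
Proof.
  intros [m0 [H1 H2]] [m [H3 H4]]. simpl in *. rewrite Rmult_1_r in H1, H2.
  pose proof Q_ge2. assert (Hp : 0 < Q ^ j) by (apply pow_lt; lra).
  exists (Z.of_nat (q ^ j) * m0 + m)%Z.
  rewrite plus_IZR, mult_IZR, <- INR_IZR_INZ, pow_INR. fold Q. rewrite <- tech_pow_Rmult.
  split.
  - assert (Q ^ j * u <= Q ^ j * (Q * fst p - IZR m0)) by (apply Rmult_le_compat_l; lra). nra.
  - assert (Q ^ j * (Q * snd p - IZR m0) <= Q ^ j * v) by (apply Rmult_le_compat_l; lra). nra.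
Qed.

Lemma maps_into_interior j p A B z : maps_into j p A B -> fst p < z < snd p ->
  exists m : Z, A < Q ^ j * z - IZR m < B.
Proof.
  intros [m [H1 H2]] Hz. exists m. pose proof Q_ge2.
  assert (0 < Q ^ j) by (apply pow_lt; lra).
  assert (Q ^ j * fst p < Q ^ j * z) by (apply Rmult_lt_compat_l; lra).
  assert (Q ^ j * z < Q ^ j * snd p) by (apply Rmult_lt_compat_l; lra). lra.
Qed.

Lemma preimage_arcs_maps_into u v p' : short_arc (u, v) -> In p' (preimage_arcs (u, v)) ->
  maps_into 1 p' u v.
Proof.
  intros Hs Hp'. pose proof Q_ge2. pose proof (Q_mul_inv_branch u). pose proof (Q_mul_inv_branch v).
  pose proof (inv_branch_range u). pose proof (inv_branch_range v).
  unfold short_arc in Hs. simpl in Hs. unfold maps_into. rewrite pow_1.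
  assert (Hwrap : Q * (a + / Q) = Q * a + 1) by (field; lra).
  unfold preimage_arcs in Hp'.
  destruct (branch_index_cases u v Hs) as [[Hle Hi] | [Hlt Hi]];
    destruct (Rle_dec (inv_branch u) (inv_branch v)); try lra; rewrite Hi in *.
  - destruct Hp' as [<- | []]. exists (- branch_index u)%Z. rewrite opp_IZR. simpl. lra.
  - rewrite plus_IZR in *. simpl IZR in *.
    assert (Q * a <= Q * inv_branch v) by (apply Rmult_le_compat_l; lra).
    assert (Q * inv_branch u < Q * (a + / Q)) by (apply Rmult_lt_compat_l; lra).
    destruct Hp' as [<- | [<- | []]]; simpl.
    + exists (- branch_index u)%Z. rewrite opp_IZR. lra.
    + exists (- branch_index u - 1)%Z. rewrite minus_IZR, opp_IZR. simpl IZR. lra.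
Qed.

Fixpoint level_arcs (p : R * R) (k : nat) : list (R * R) :=
  match k with
  | O => [p]
  | S k => flat_map preimage_arcs (level_arcs p k)
  end.

Fixpoint arcs_upto (p : R * R) (n : nat) : list (R * R) :=
  match n with
  | O => []
  | S n => arcs_upto p n ++ level_arcs p (S n)
  end.

Section Arc.
Variable p : R * R.
Hypothesis p_short : short_arc p.

Lemma level_arcs_short k p' : In p' (level_arcs p k) -> short_arc p'.
Proof.
  revert p'. induction k as [|k IH]; intros p' Hp'; simpl in Hp'.
  - destruct Hp' as [<- | []]. exact p_short.
  - apply in_flat_map in Hp' as [[u v] [Huv Hp']].
    pose proof (preimage_arcs_within u v (IH _ Huv) p' Hp'). pose proof invQ_bounds.
    unfold short_arc. lra.
Qed.

Lemma level_arcs_within k p' : In p' (level_arcs p (S k)) ->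
  a <= fst p' <= snd p' /\ snd p' <= a + / Q.
Proof.
  intros Hp'. simpl in Hp'. apply in_flat_map in Hp' as [[u v] [Huv Hp']].
  exact (preimage_arcs_within u v (level_arcs_short k _ Huv) p' Hp').
Qed.

Lemma arcs_upto_within n p' : In p' (arcs_upto p n) ->
  a <= fst p' <= snd p' /\ snd p' <= a + / Q.
Proof.
  induction n as [|n IH]; simpl; [intros [] |].
  intros Hp'. apply in_app_or in Hp' as [Hp' | Hp']; [exact (IH Hp') |].
  exact (level_arcs_within n p' Hp').
Qed.

Lemma rsum_len_level_arcs k : rsum len (level_arcs p k) = len p / Q ^ k.
Proof.
  pose proof Q_ge2. induction k as [|k IH]; simpl.
  - unfold len. simpl. field.
  - rewrite rsum_flat_map, (rsum_ext _ (fun p' => / Q * len p')).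
    + rewrite rsum_scal, IH. field. split; [apply pow_nonzero |]; lra.
    + intros [u v] Huv. rewrite rsum_len_preimage_arcs by exact (level_arcs_short k _ Huv).
      unfold len. simpl. field. lra.
Qed.

Lemma rsum_len_arcs_upto n : rsum len (arcs_upto p n) = len p / (Q - 1) * (1 - / Q ^ n).
Proof.
  pose proof Q_ge2. induction n as [|n IH].
  - simpl. field. lra.
  - change (arcs_upto p (S n)) with (arcs_upto p n ++ level_arcs p (S n)).
    rewrite rsum_app, IH, rsum_len_level_arcs. simpl.
    assert (Q ^ n <> 0) by (apply pow_nonzero; lra). field. lra.
Qed.

Lemma incr_psi_expansion n :
  incr psi p = rsum (incr g) (arcs_upto p n) + rsum (incr psi) (level_arcs p n).
Proof.
  induction n as [|n IH].
  - simpl. ring.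
  - change (arcs_upto p (S n)) with (arcs_upto p n ++ level_arcs p (S n)).
    rewrite rsum_app, IH, Rplus_assoc. f_equal. simpl level_arcs.
    rewrite !rsum_flat_map, <- rsum_plus. apply rsum_ext. intros [u v] Huv.
    rewrite <- rsum_plus. unfold incr at 1. simpl.
    rewrite (incr_psi_preimage_arcs u v (level_arcs_short n _ Huv)).
    apply rsum_ext. intros. ring.
Qed.

Lemma rsum_incr_psi_level_le k : rsum (incr psi) (level_arcs p k) <= L * (len p / Q ^ k).
Proof.
  rewrite <- rsum_len_level_arcs, <- rsum_scal. apply rsum_le.
  intros [u v] Huv. pose proof (level_arcs_short k _ Huv) as Hs. unfold short_arc in Hs.
  simpl in Hs. unfold incr, len. simpl.
  pose proof (psi_lipschitz v u) as Hl. rewrite (Rabs_pos_eq (v - u)) in Hl by lra.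
  pose proof (Rle_abs (psi v - psi u)). lra.
Qed.

Lemma incr_psi_le_of_sums (B K : R) : 0 <= K ->
  (forall n, rsum (incr g) (arcs_upto p n) <= B + K / Q ^ n) -> incr psi p <= B.
Proof.
  intros HK Hsum. pose proof Q_ge2. pose proof L_nonneg. unfold short_arc in p_short.
  apply (le_of_le_plus_geometric _ _ (K + L * len p) Q); [lra |]. intros n.
  rewrite (incr_psi_expansion n). pose proof (Hsum n). pose proof (rsum_incr_psi_level_le n).
  assert (0 < Q ^ n) by (apply pow_lt; lra).
  replace ((K + L * len p) / Q ^ n) with (K / Q ^ n + L * (len p / Q ^ n)) by (field; lra).
  lra.
Qed.

Lemma level_arcs_maps_into k p' : In p' (level_arcs p k) ->
  maps_into k p' (fst p) (snd p) /\ forall j, (j < k)%nat -> maps_into j p' a (a + / Q).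
Proof.
  revert p'. induction k as [|k IH]; intros p' Hp'.
  - destruct Hp' as [<- | []]. split; [apply maps_into_0; lra | intros; lia].
  - pose proof (level_arcs_within k p' Hp') as Hin.
    simpl in Hp'. apply in_flat_map in Hp' as [[u v] [Huv Hp']].
    pose proof (preimage_arcs_maps_into u v p' (level_arcs_short k _ Huv) Hp') as H1.
    destruct (IH _ Huv) as [IHp IHC]. split; [exact (maps_into_S k p' u v _ _ H1 IHp) |].
    intros [|j] Hj; [apply maps_into_0; lra |].
    apply (maps_into_S j p' u v _ _ H1), IHC. lia.
Qed.

Lemma level_arcs_close k c c' : In c (level_arcs p k) -> In c' (level_arcs p k) ->
  snd c - fst c' < 1.
Proof.
  destruct k as [|k]; intros Hc Hc'.
  - destruct Hc as [<- | []], Hc' as [<- | []]. unfold short_arc in p_short. lra.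
  - pose proof (level_arcs_within k c Hc). pose proof (level_arcs_within k c' Hc').
    pose proof invQ_bounds. lra.
Qed.

Lemma level_arcs_disjoint k : ForallOrdPairs interior_disjoint (level_arcs p k).
Proof.
  induction k as [|k IH]; simpl; [repeat constructor |].
  apply ForallOrdPairs_flat_map; [intros; apply preimage_arcs_disjoint |].
  apply (ForallOrdPairs_impl interior_disjoint); [| exact IH].
  intros [u v] [u' v'] Huv Huv' Hd c c' Hc Hc' z Hz Hz'.
  destruct (maps_into_interior 1 c u v z
              (preimage_arcs_maps_into u v c (level_arcs_short k _ Huv) Hc) Hz) as [m Hm].
  destruct (maps_into_interior 1 c' u' v' z
              (preimage_arcs_maps_into u' v' c' (level_arcs_short k _ Huv') Hc') Hz') as [m' Hm'].
  pose proof (level_arcs_close k _ _ Huv Huv'). pose proof (level_arcs_close k _ _ Huv' Huv).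
  simpl in *. assert (m' = m) as ->.
  { assert (Hlt : (-1 < m' - m < 1)%Z) by (split; apply lt_IZR; rewrite minus_IZR; simpl; lra).
    lia. }
  apply (Hd (Q ^ 1 * z - IZR m)); simpl; lra.
Qed.

Lemma arcs_upto_In n c : In c (arcs_upto p n) ->
  exists j, (1 <= j <= n)%nat /\ In c (level_arcs p j).
Proof.
  induction n as [|n IH]; simpl; [intros [] |]. intros Hc.
  apply in_app_or in Hc as [Hc | Hc].
  - destruct (IH Hc) as [j [Hj Hcj]]. exists j. split; [lia | exact Hcj].
  - exists (S n). split; [lia | exact Hc].
Qed.

Hypothesis p_outside : a + / Q <= fst p /\ snd p <= a + 1.

(* T^j sends level-j arcs into p but level-k arcs (k > j) into [a, a + 1/Q]. *)
Lemma level_arcs_disjoint_across j k c c' : (j < k)%nat ->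
  In c (level_arcs p j) -> In c' (level_arcs p k) -> interior_disjoint c c'.
Proof.
  intros Hjk Hc Hc' z Hz Hz'.
  destruct (level_arcs_maps_into j c Hc) as [Hp _].
  destruct (level_arcs_maps_into k c' Hc') as [_ HC].
  destruct (maps_into_interior j c _ _ z Hp Hz) as [m Hm].
  destruct (maps_into_interior j c' _ _ z (HC j Hjk) Hz') as [m' Hm'].
  destruct (Z_le_gt_dec m' m) as [Hle | Hgt].
  - apply IZR_le in Hle. lra.
  - assert (Hge : (m + 1 <= m')%Z) by lia. apply IZR_le in Hge. rewrite plus_IZR in Hge.
    simpl in Hge. lra.
Qed.

Lemma arcs_upto_disjoint n : ForallOrdPairs interior_disjoint (arcs_upto p n).
Proof.
  induction n as [|n IH]; [constructor |].
  apply ForallOrdPairs_app; [exact IH | apply level_arcs_disjoint |].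
  intros c c' Hc Hc'. destruct (arcs_upto_In n c Hc) as [j [Hj Hcj]].
  apply (level_arcs_disjoint_across j (S n)); [lia | exact Hcj | exact Hc'].
Qed.

End Arc.

Lemma psi_incr_le_outside x y mu :
  a + / Q <= x -> x < y -> y <= a + 1 ->
  separating_slope g a (a + (y - x) / (Q - 1)) (a + / Q) mu ->
  psi y - psi x <= g (a + (y - x) / (Q - 1)) - g a.
Proof.
  intros Hx Hxy Hy Hsep. set (r := (y - x) / (Q - 1)) in *.
  pose proof Q_ge2. pose proof invQ_bounds.
  assert (Hshort : short_arc (x, y)) by (unfold short_arc; simpl; lra).
  assert (Hr : 0 <= r <= / Q).
  { unfold r. split; [apply Rdiv_le_0_compat | apply div_pred_le_inv]; lra. }
  apply (incr_psi_le_of_sums (x, y) Hshort _ (Rabs mu * r)); [pose proof (Rabs_pos mu); nra |].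
  intros n.
  pose proof (sum_incr_le_separating g mu a (a + / Q) r (arcs_upto (x, y) n) ltac:(lra)
                ltac:(lra) Hsep (arcs_upto_within (x, y) Hshort n)
                (arcs_upto_disjoint (x, y) Hshort (conj Hx Hy) n)) as Hb.
  rewrite (rsum_len_arcs_upto (x, y) Hshort) in Hb. unfold len in Hb. simpl in Hb. fold r in Hb.
  assert (0 < Q ^ n) by (apply pow_lt; lra).
  assert (- (mu * r) <= Rabs mu * r) by (pose proof (Rle_abs (- mu)); rewrite Rabs_Ropp in *; nra).
  replace (mu * (r * (1 - / Q ^ n) - r)) with (- (mu * r) / Q ^ n) in Hb by (field; lra).
  assert (- (mu * r) / Q ^ n <= Rabs mu * r / Q ^ n)
    by (apply Rmult_le_compat_r; [apply Rlt_le, Rinv_0_lt_compat |]; lra).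
  lra.
Qed.

Lemma psi_incr_le_of_slope_bound u v s1 :
  short_arc (u, v) -> 0 <= s1 -> separating_slope g a a (a + / Q) s1 ->
  psi v - psi u <= s1 * ((v - u) / (Q - 1)).
Proof.
  intros Hshort Hs1 [_ Hslope]. pose proof Q_ge2. unfold short_arc in Hshort. simpl in Hshort.
  apply (incr_psi_le_of_sums (u, v) Hshort _ 0); [lra |]. intros n.
  assert (Hb : rsum (incr g) (arcs_upto (u, v) n) <= s1 * rsum len (arcs_upto (u, v) n)).
  { rewrite <- rsum_scal. apply rsum_le. intros c Hc.
    destruct (arcs_upto_within (u, v) Hshort n c Hc). apply Hslope; lra. }
  rewrite (rsum_len_arcs_upto (u, v) Hshort) in Hb. unfold len in Hb. simpl in Hb.
  assert (0 < / Q ^ n) by (apply Rinv_0_lt_compat, pow_lt; lra).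
  assert (0 <= (v - u) / (Q - 1)) by (apply Rdiv_le_0_compat; lra).
  assert (0 <= s1 * ((v - u) / (Q - 1)) * / Q ^ n)
    by (apply Rmult_le_pos; [apply Rmult_le_pos |]; lra).
  replace (0 / Q ^ n) with 0 by (unfold Rdiv; ring). lra.
Qed.

Lemma psi_incr_le_short x y mu s1 :
  short_arc (x, y) -> 0 <= s1 ->
  separating_slope g a (a + (y - x) / Q) (a + / Q) mu ->
  separating_slope g a a (a + / Q) s1 ->
  psi y - psi x <= g (a + (y - x) / Q) - g a + s1 * ((y - x) / (Q * (Q - 1))).
Proof.
  intros Hshort Hs1 Hsep Hslope. set (r := (y - x) / Q) in *.
  pose proof Q_ge2. pose proof invQ_bounds. pose proof Hshort as Hxy. unfold short_arc in Hxy.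
  simpl in Hxy.
  assert (Hr : 0 <= r <= / Q).
  { unfold r, Rdiv. split; [apply Rmult_le_pos; lra |].
    rewrite <- (Rmult_1_l (/ Q)) at 2. apply Rmult_le_compat_r; lra. }
  rewrite (incr_psi_preimage_arcs x y Hshort), rsum_plus.
  pose proof (sum_incr_le_separating g mu a (a + / Q) r (preimage_arcs (x, y)) ltac:(lra)
                ltac:(lra) Hsep (preimage_arcs_within x y Hshort)
                (preimage_arcs_disjoint (x, y))) as Hg.
  rewrite (rsum_len_preimage_arcs x y Hshort) in Hg. fold r in Hg.
  assert (Hpsi : rsum (incr psi) (preimage_arcs (x, y))
                 <= rsum (fun c => s1 / (Q - 1) * len c) (preimage_arcs (x, y))).
  { apply rsum_le. intros [u v] Huv.
    destruct (preimage_arcs_within x y Hshort (u, v) Huv) as [Hu Hv]. simpl in Hu, Hv.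
    pose proof (psi_incr_le_of_slope_bound u v s1 ltac:(unfold short_arc; simpl; lra)
                  Hs1 Hslope).
    unfold incr, len. simpl. unfold Rdiv in *. lra. }
  rewrite rsum_scal, (rsum_len_preimage_arcs x y Hshort) in Hpsi. fold r in Hpsi.
  replace (s1 * ((y - x) / (Q * (Q - 1)))) with (s1 / (Q - 1) * r) by (unfold r; field; lra).
  lra.
Qed.

End InverseBranch.

Definition cohomological_data (q : nat) (c lam : R) (psi : R -> R) (beta L : R) : Prop :=
  periodic1 psi /\
  (forall x y, Rabs (psi x - psi y) <= L * Rabs (x - y)) /\
  (forall x, lam <= x <= lam + / INR q -> fc q c x + psi x - psi (INR q * x) = beta).

Lemma cohomological_data_of_pre_q_Sturmian q c lam psi beta :
  pre_q_Sturmian_with q c lam psi beta -> exists L, cohomological_data q c lam psi beta L.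
Proof.
  intros [_ [Hper [[L Hlip] Heq]]]. exists L. split; [exact Hper | split].
  - intros x y. pose proof (Hlip x y I I 0%Z) as H. rewrite Rminus_0_r in H. exact H.
  - intros x Hx. apply Heq. exists 0%Z. rewrite Rminus_0_r. exact Hx.
Qed.

Lemma cohomological_data_reflect q c lam psi beta L :
  cohomological_data q c lam psi beta L ->
  cohomological_data q (- c) (- lam - / INR q) (fun z => psi (- z)) beta L.
Proof.
  intros [Hper [Hlip Heq]]. split; [| split].
  - intros x. rewrite <- (Hper (- (x + 1))). f_equal. ring.
  - intros x y. replace (x - y) with (- (- x - - y)) by ring. rewrite Rabs_Ropp. apply Hlip.
  - intros x Hx. rewrite <- (Heq (- x)) by lra. unfold fc.
    replace (x + - c) with (- (- x + c)) by ring. rewrite f0_even.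
    replace (INR q * - x) with (- (INR q * x)) by ring. reflexivity.
Qed.

Section SturmianBounds.
Variables (q : nat) (c lam : R) (psi : R -> R) (beta L w : R).
Hypothesis q_ge2 : (2 <= q)%nat.
Hypothesis lam_range : - / INR q - c < lam < - c.
(* w is 1/q - theta; for the reflected data it becomes theta. *)
Hypothesis w_def : w = - (lam + c).
Hypothesis data : cohomological_data q c lam psi beta L.

Let q_pos : (0 < q)%nat.
Proof. lia. Qed.

Lemma fc_separating_slope m : lam <= m <= lam + / INR q ->
  separating_slope (fc q c) lam m (lam + / INR q) (f0' q (m + c)).
Proof.
  intros Hm. change (fc q c) with (fun z => f0 q (z + c)).
  apply separating_slope_shift, (f0_separating_slope q q_pos); lra.
Qed.

Lemma fc_lam_add z : fc q c (lam + z) = f0 q (w - z).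
Proof. unfold fc. rewrite <- f0_even. f_equal. lra. Qed.

Lemma fc_lam : fc q c lam = f0 q w.
Proof. rewrite <- (Rplus_0_r lam), fc_lam_add. f_equal. ring. Qed.

Lemma Derive_f0_w : Derive (f0 q) w = - f0' q (lam + c).
Proof.
  pose proof (invQ_bounds q q_ge2).
  rewrite (Derive_f0 q q_pos) by lra. rewrite w_def, f0'_odd. reflexivity.
Qed.

Lemma psi_incr_bound_outside x y : lam + / INR q <= x -> x < y -> y <= lam + 1 ->
  psi y - psi x <= f0 q (w - (y - x) / (INR q - 1)) - f0 q w /\
  f0 q (w - (y - x) / (INR q - 1)) - f0 q w <= f0 q 0 - f0 q w.
Proof.
  intros Hx Hxy Hy. destruct data as [Hper [Hlip Heq]].
  pose proof (Q_ge2 q q_ge2). pose proof (invQ_bounds q q_ge2).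
  set (r := (y - x) / (INR q - 1)).
  assert (Hr : 0 <= r <= / INR q)
    by (unfold r; split; [apply Rdiv_le_0_compat | apply div_pred_le_inv]; lra).
  pose proof (psi_incr_le_outside q q_ge2 lam beta L psi (fc q c) Hper Hlip Heq x y _
                Hx Hxy Hy (fc_separating_slope (lam + r) ltac:(lra))) as Hpsi.
  fold r in Hpsi. rewrite fc_lam_add, fc_lam in Hpsi. split; [exact Hpsi |].
  pose proof (f0_le_f0_0 q q_pos (w - r) ltac:(lra)). lra.
Qed.

Lemma psi_incr_bound_short x y : x < y -> y - x < 1 ->
  psi y - psi x <= f0 q (w - (y - x) / INR q) - f0 q w
                   - Derive (f0 q) w * ((y - x) / (INR q * (INR q - 1))) /\
  f0 q (w - (y - x) / INR q) - f0 q w - Derive (f0 q) w * ((y - x) / (INR q * (INR q - 1)))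
    <= - Derive (f0 q) w * ((y - x) / (INR q - 1)).
Proof.
  intros Hxy Hy. destruct data as [Hper [Hlip Heq]].
  pose proof (Q_ge2 q q_ge2). pose proof (invQ_bounds q q_ge2).
  set (r := (y - x) / INR q).
  assert (Hr : 0 <= r < / INR q).
  { unfold r, Rdiv. split; [apply Rmult_le_pos; lra |].
    rewrite <- (Rmult_1_l (/ INR q)) at 2. apply Rmult_lt_compat_r; lra. }
  assert (Hs1 : 0 <= f0' q (lam + c)).
  { rewrite <- (f0'_0 q). apply (f0'_antitone q q_pos); lra. }
  pose proof (psi_incr_le_short q q_ge2 lam beta L psi (fc q c) Hper Hlip Heq x y _ _
                ltac:(unfold short_arc; simpl; lra) Hs1
                (fc_separating_slope (lam + r) ltac:(lra))
                (fc_separating_slope lam ltac:(lra))) as Hpsi.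
  fold r in Hpsi. rewrite fc_lam_add, fc_lam in Hpsi. rewrite Derive_f0_w. split; [lra |].
  destruct (f0_separating_slope q q_pos (w - r) w w) as [Hleft _]; try lra.
  pose proof (Hleft (w - r) w ltac:(lra) ltac:(lra) ltac:(lra)) as Hconc.
  rewrite <- (Derive_f0 q q_pos), Derive_f0_w in Hconc by lra.
  replace ((y - x) / (INR q - 1)) with (r + (y - x) / (INR q * (INR q - 1)))
    by (unfold r; field; lra).
  lra.
Qed.

End SturmianBounds.

Theorem lemma5p4 (q : nat) (c lam : R) (psi : R -> R) (beta : R) :
  (2 <= q)%nat ->
  - / INR q - c < lam < - c ->
  pre_q_Sturmian_with q c lam psi beta ->
  let theta := lam + / INR q + c in
  let f := f0 q in
  let Q := INR q in
  (* (i) *)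
  (forall x y, lam + / Q <= x -> x < y -> y <= lam + 1 ->
     psi y - psi x <= f (/ Q - theta - (y - x) / (Q - 1)) - f (/ Q - theta) /\
     f (/ Q - theta - (y - x) / (Q - 1)) - f (/ Q - theta)
       <= f 0 - f (/ Q - theta)) /\
  (* (i)' *)
  (forall x y, lam + / Q - 1 <= y -> y < x -> x <= lam ->
     psi y - psi x <= f (theta - (x - y) / (Q - 1)) - f theta /\
     f (theta - (x - y) / (Q - 1)) - f theta <= f 0 - f theta) /\
  (* (ii) *)
  (forall x y, x < y -> y - x < 1 ->
     psi y - psi x <= f (/ Q - theta - (y - x) / Q) - f (/ Q - theta)
                      - Derive f (/ Q - theta) * ((y - x) / (Q * (Q - 1))) /\
     f (/ Q - theta - (y - x) / Q) - f (/ Q - theta)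
       - Derive f (/ Q - theta) * ((y - x) / (Q * (Q - 1)))
       <= - Derive f (/ Q - theta) * ((y - x) / (Q - 1))) /\
  (* (ii)' *)
  (forall x y, y < x -> x - y < 1 ->
     psi y - psi x <= f (theta - (x - y) / Q) - f theta
                      - Derive f theta * ((x - y) / (Q * (Q - 1))) /\
     f (theta - (x - y) / Q) - f theta - Derive f theta * ((x - y) / (Q * (Q - 1)))
       <= - Derive f theta * ((x - y) / (Q - 1))).
Proof.
  intros hq Hlam HS. cbv zeta.
  destruct (cohomological_data_of_pre_q_Sturmian _ _ _ _ _ HS) as [L Hdata].
  pose proof (cohomological_data_reflect _ _ _ _ _ _ Hdata) as Hdata'.
  assert (Hlam' : - / INR q - - c < - lam - / INR q < - - c) by lra.
  assert (Hw : / INR q - (lam + / INR q + c) = - (lam + c)) by ring.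
  assert (Hw' : lam + / INR q + c = - (- lam - / INR q + - c)) by ring.
  split; [| split; [| split]].
  - exact (psi_incr_bound_outside _ _ _ _ _ _ _ hq Hlam Hw Hdata).
  - intros x y Hy Hyx Hx.
    pose proof (psi_incr_bound_outside _ _ _ _ _ _ _ hq Hlam' Hw' Hdata' (- x) (- y)
                  ltac:(lra) ltac:(lra) ltac:(lra)) as H.
    cbv beta in H. rewrite !Ropp_involutive in H.
    replace (- y - - x) with (x - y) in H by ring. exact H.
  - exact (psi_incr_bound_short _ _ _ _ _ _ _ hq Hlam Hw Hdata).
  - intros x y Hyx Hxy.
    pose proof (psi_incr_bound_short _ _ _ _ _ _ _ hq Hlam' Hw' Hdata' (- x) (- y)
                  ltac:(lra) ltac:(lra)) as H.
    cbv beta in H. rewrite !Ropp_involutive in H.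
    replace (- y - - x) with (x - y) in H by ring. exact H.
Qed.
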